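(* If $m$ is prime, then $\dim\mathcal{H}_{(m)}=\frac{(m-1)!-(m-1)}{m}+m-1$.
   Context: $\mathcal{H}_{(m)}$ is the quotient of the span in $\mathbb{C}[\mathbb{S}_m]$ of all $m$-cycles by the span of those generalized Vassiliev elements all of whose terms are $m$-cycles, where for $m\ge2$, $\gamma\in\mathbb{S}_{m-1}$, $q\in[m-1]\cup\{*\}$, $t\in\{0,\dots,m-1\}$, $\alpha_t\in\mathbb{S}_m$ is obtained by inserting a new point $x$ into the line $1<\dots<m-1$ in the gap between $t$ and $t+1$, relabeling in order, acting as $\gamma$ on old points except $q\mapsto x\mapsto\gamma(q)$ if $q\ne*$, $x$ fixed if $q=*$, and for a cycle $v$ of $\gamma$, $E(\gamma,q,v)=\sum_{j\in v}(\alpha_{j-1}-\alpha_j)$. *)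

From mathcomp Require Import all_boot all_order all_algebra all_fingroup all_field.
Set Implicit Arguments. Unset Strict Implicit. Unset Printing Implicit Defensive.
Import GRing.Theory.
Local Open Scope ring_scope.

(* Points {1,...,k} are encoded 0-based as 'I_k (label j <-> ordinal j-1).
   We take m = n.+1, so gamma : 'S_n = S_{m-1}, the old line is 1<...<m-1,
   and the new point x inserted in the gap between t and t+1 (t = 0..m-1)
   receives label t+1, i.e. ordinal t : 'I_m; old point i is relabelled
   lift t i (= i if i < t, i+1 otherwise).  q : option 'I_n, None = '*'. *)

Section Alpha.
Variables (n : nat) (gamma : 'S_n) (q : option 'I_n) (t : 'I_n.+1).

Definition alpha_fun (y : 'I_n.+1) : 'I_n.+1 :=
  match unlift t y with
  | None => if q is Some q0 then lift t (gamma q0) else t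
  | Some i => if q == Some i then t else lift t (gamma i)
  end.

Lemma alpha_fun_inj : injective alpha_fun.
Proof.
move=> y1 y2; rewrite /alpha_fun.
have nl j : (lift t j == t) = false by rewrite eq_sym (negbTE (neq_lift _ _)).
have nl' j : (t == lift t j) = false by rewrite (negbTE (neq_lift _ _)).
have li j k : (lift t (gamma j) == lift t (gamma k)) = (j == k).
  by rewrite (inj_eq (@lift_inj _ t)) (inj_eq (@perm_inj _ gamma)).
case: unliftP => [i1|] ->; case: unliftP => [i2|] -> //=;
  case: q => [q0|] //=; rewrite ?(inj_eq Some_inj).
  all: do ?[case: eqP => [?|?]]; subst => //; move/eqP; rewrite ?nl ?nl' ?li // => /eqP; try congruence.
Qed.


Definition alpha : 'S_n.+1 := perm alpha_fun_inj.
End Alpha.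

(* The group algebra C[S_k], realised as functions S_k -> algC
   (algC = MathComp's algebraically closed field of complex algebraic numbers). *)
Definition grpalg (k : nat) := {ffun 'S_k -> algC^o}.

Definition gelt (k : nat) (s : 'S_k) : grpalg k := [ffun s' => (s' == s)%:R].

Definition is_full_cycle (k : nat) (s : 'S_k) : bool := #|porbits s| == 1%N.

(* The generalized Vassiliev element E(gamma,q,v) = sum_{j in v} (alpha_{j-1} - alpha_j),
   for gamma in S_{m-1} (m = n.+1), q in [m-1] u {*}, v a cycle of gamma.
   With 0-based j : 'I_n (label j+1), alpha_{j} (label-1) has gap index
   widen_ord _ j (value j) and alpha_{j+1} has gap index lift ord0 j (value j+1). *)
Definition vass (n : nat) (gamma : 'S_n) (q : option 'I_n) (v : {set 'I_n})
  : grpalg n.+1 :=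
  \sum_(j in v) (gelt (alpha gamma q (widen_ord (leqnSn n) j))
                 - gelt (alpha gamma q (lift ord0 j))).

Definition vass_all_full (n : nat) (gamma : 'S_n) (q : option 'I_n)
  (v : {set 'I_n}) : bool :=
  [forall j in v, is_full_cycle (alpha gamma q (widen_ord (leqnSn n) j))
                  && is_full_cycle (alpha gamma q (lift ord0 j))].

Definition cycle_span (k : nat) : {vspace grpalg k} :=
  (\sum_(s : 'S_k | is_full_cycle s) <[gelt s]>)%VS.

Definition vass_span (n : nat) : {vspace grpalg n.+1} :=
  (\sum_(gamma : 'S_n) \sum_(q : option 'I_n)
     \sum_(v in porbits gamma | vass_all_full gamma q v) <[vass gamma q v]>)%VS.

(* dim H_(m) = dim (cycle_span / vass_span); vass_span is a subspace of
   cycle_span, so the quotient has dimension \dim cycle_span - \dim vass_span.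
   Only meaningful for m >= 2 (m = n.+1 with n >= 1); m = 0 is a dummy case. *)
Definition H_dim (m : nat) : nat :=
  match m with
  | 0 => 0
  | n.+1 => (\dim (cycle_span n.+1) - \dim (vass_span n))%N
  end.

(* In cycle notation, alpha_t is gamma with the new point x inserted right
   after q in the cycle of q, or kept fixed when q = *, the gap t only
   relabelling the points.  Hence alpha_t is an m-cycle exactly when q is
   a point and gamma is an (m-1)-cycle; then v = [m-1], and E telescopes
   to alpha_0 - alpha_(m-1) = tau^c - tau, where tau = alpha_(m-1) and c is
   the rotation k |-> k + 1; moreover every m-cycle tau arises.  So H_(m)
   is the span of the m-cycles modulo the relations tau = tau^c, and its
   dimension is the number of orbits of <c> acting by conjugation on the
   (m-1)! m-cycles.  For m prime, Burnside's lemma counts them: 1 fixes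
   every m-cycle, and any other element of <c> generates <c>, so the
   m-cycles it fixes are those commuting with c, namely the m - 1
   nontrivial powers of c. *)

From mathcomp Require Import all_boot all_order all_algebra all_fingroup all_field.
From mathcomp Require Import cyclic ring.
Set Implicit Arguments. Unset Strict Implicit. Unset Printing Implicit Defensive.
Import GRing.Theory Num.Theory.
Local Open Scope group_scope.

Section Porbit.
Variable T : finType.
Implicit Types (s : {perm T}) (x y : T).

Lemma porbit_sub_closed s (A : {set T}) x :
  x \in A -> {in A, forall y, s y \in A} -> porbit s x \subset A.
Proof.
move=> xA sA; apply/subsetP => _ /porbitP [i ->].
by elim: i => [|i IH]; rewrite ?expg0 ?perm1 // expgSr permM sA.
Qed.

Lemma porbit_fix s x : s x = x -> porbit s x = [set x].
Proof.
move=> sx; apply/eqP; rewrite eqEsubset sub1set porbit_id andbT.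
by apply: porbit_sub_closed; rewrite ?set11 // => y /set1P ->; rewrite sx set11.
Qed.

End Porbit.

Section FullCycle.
Variable k : nat.
Implicit Types (s r : 'S_k) (x y : 'I_k).

Lemma is_full_cycleP s x0 :
  reflect (forall x y, y \in porbit s x) (is_full_cycle s).
Proof.
rewrite /is_full_cycle; apply: (iffP cards1P) => [[A defA] x y|full].
  have /set1P -> : porbit s x \in [set A] by rewrite -defA imset_f.
  have /set1P <- : porbit s y \in [set A] by rewrite -defA imset_f.
  exact: porbit_id.
exists (porbit s x0); apply/setP => A; rewrite inE.
apply/imsetP/eqP => [[x _ ->]|->]; last by exists x0.
by apply/setP => y; rewrite !full.
Qed.

Lemma is_full_cycleJ s r : is_full_cycle (s ^ r) = is_full_cycle s.
Proof.
have conjI s' r' : is_full_cycle s' -> is_full_cycle (s' ^ r').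
  case: (pickP 'I_k) => [x0 _ /(is_full_cycleP _ x0) full|no_point].
    apply/(is_full_cycleP _ x0) => x y.
    have /porbitP [i defy] := full (r'^-1 x) (r'^-1 y).
    apply/porbitP; exists i.
    by rewrite -conjXg -{1}[x](permKV r') permJ -defy permKV.
  suff -> : s' ^ r' = s' by [].
  by apply/permP => x; have := no_point x.
apply/idP/idP => [/(conjI _ r^-1)|]; last exact: conjI.
by rewrite conjgK.
Qed.

Lemma full_cycle_fixN s x y : y != x -> is_full_cycle s -> s x != x.
Proof.
move=> yx /(is_full_cycleP _ x) full; apply: contra yx => /eqP sx.
by have := full x y; rewrite porbit_fix // => /set1P ->.
Qed.

End FullCycle.

Definition full_cycles k : {set 'S_k} := [set s | is_full_cycle s].

Lemma acts_full_cycles k (A : {set 'S_k}) : [acts A, on full_cycles k | 'J].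
Proof. by apply/actsP => a _ s; rewrite !inE /= is_full_cycleJ. Qed.

Section LiftPermFix.
Variables (n : nat) (i : 'I_n.+1).
Implicit Types (g : 'S_n) (s : 'S_n.+1).

Lemma lift_perm_inj : injective (lift_perm i i).
Proof.
move=> g h eqgh; apply/permP => k; apply: (@lift_inj _ i).
by rewrite -[lift i (g k)](lift_perm_lift i i) eqgh lift_perm_lift.
Qed.

Lemma lift_perm_fixP s : s i = i -> exists g, lift_perm i i g = s.
Proof.
move=> si; have sN k : s (lift i k) != i.
  by rewrite -{2}si (inj_eq perm_inj) eq_sym neq_lift.
pose g0 k := odflt k (unlift i (s (lift i k))).
have liftg k : lift i (g0 k) = s (lift i k).
  by rewrite /g0; case: unliftP => [j ->|/eqP] //; rewrite (negbTE (sN k)).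
have g0_inj : injective g0.
  by move=> k1 k2 /(congr1 (lift i)); rewrite !liftg => /perm_inj /lift_inj.
exists (perm g0_inj); apply/permP => y; case: (unliftP i y) => [k ->|->].
  by rewrite lift_perm_lift permE liftg.
by rewrite lift_perm_id si.
Qed.

Lemma lift_permX g m : lift_perm i i g ^+ m = lift_perm i i (g ^+ m).
Proof.
elim: m => [|m IH]; first by rewrite !expg0 lift_perm1.
by rewrite !expgSr IH lift_permM.
Qed.

Lemma porbit_lift_perm g k :
  porbit (lift_perm i i g) (lift i k) = lift i @: porbit g k.
Proof.
apply/setP => y; apply/porbitP/imsetP => [[m ->]|[_ /porbitP [m ->] ->]].
  by exists ((g ^+ m) k); rewrite ?mem_porbit // lift_permX lift_perm_lift.
by exists m; rewrite lift_permX lift_perm_lift.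
Qed.

Lemma card_porbits_lift_perm g :
  #|porbits (lift_perm i i g)| = #|porbits g|.+1.
Proof.
set L := lift_perm i i g.
have Li : porbit L i = [set i] by rewrite porbit_fix // lift_perm_id.
have rest : porbits L :\ [set i] = (fun A : {set 'I_n} => lift i @: A) @: porbits g.
  apply/setP => A; rewrite !inE; apply/andP/imsetP => [[AN /imsetP [y _ defA]]|].
    subst A; case: (unliftP i y) AN => [k ->|->]; last by rewrite Li eqxx.
    by exists (porbit g k); rewrite ?imset_f ?porbit_lift_perm.
  move=> [_ /imsetP [k _ ->] ->]; rewrite -porbit_lift_perm imset_f //; split=> //.
  apply/eqP => /setP /(_ (lift i k)); rewrite porbit_id inE eq_sym.
  by rewrite (negbTE (neq_lift _ _)).
rewrite (cardsD1 [set i]) -{1}Li imset_f // rest card_imset //.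
exact: imset_inj lift_inj.
Qed.

End LiftPermFix.

Section Alpha.
Variables (n : nat) (g : 'S_n).

Lemma alpha_None t : alpha g None t = lift_perm t t g.
Proof.
apply/permP => y; rewrite !permE /alpha_fun /lift_perm_fun.
by case: (unliftP t y).
Qed.

Lemma alpha_Some q0 t :
  alpha g (Some q0) t = tperm (lift t q0) t * lift_perm t t g.
Proof.
apply/permP => y; rewrite permM; case: (unliftP t y) => [i ->|->]; last first.
  by rewrite tpermR lift_perm_lift permE /alpha_fun unlift_none.
rewrite permE /alpha_fun liftK; case: eqP => [[<-]|neq].
  by rewrite tpermL lift_perm_id.
rewrite tpermD ?lift_perm_lift // ?(inj_eq (@lift_inj _ t)) 1?eq_sym.
  by apply/eqP => eqi; apply: neq; rewrite eqi.
by rewrite eq_sym; exact: neq_lift.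
Qed.

Lemma alpha_conj q t : alpha g q t = alpha g q ord_max ^ lift_perm ord_max t 1.
Proof.
have liftJ : lift_perm ord_max ord_max g ^ lift_perm ord_max t 1 = lift_perm t t g.
  by rewrite conjgE lift_permV invg1 !lift_permM mulg1 mul1g.
case: q => [q0|]; last by rewrite !alpha_None liftJ.
by rewrite !alpha_Some conjMg liftJ tpermJ lift_perm_id lift_perm_lift perm1.
Qed.

Lemma card_porbits_alpha_Some q0 t :
  #|porbits (alpha g (Some q0) t)| = #|porbits g|.
Proof.
have := porbits_mul_tperm (lift_perm t t g) (lift t q0) t.
rewrite porbit_fix ?lift_perm_id // inE eq_sym neq_lift card_porbits_lift_perm.
by rewrite /= -alpha_Some addn1 addn2 => -[].
Qed.

Lemma is_full_cycle_alpha q t :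
  is_full_cycle (alpha g q t) = if q is Some _ then is_full_cycle g else n == 0.
Proof.
rewrite /is_full_cycle; case: q => [q0|]; first by rewrite card_porbits_alpha_Some.
rewrite alpha_None card_porbits_lift_perm eqSS cards_eq0.
case: n g t => [|n'] g' _.
  by apply/eqP/setP => A; rewrite inE; apply/imsetP => -[[]].
by apply/negbTE/set0Pn; exists (porbit g' ord0); apply: imset_f.
Qed.

End Alpha.

Section AlphaBijection.
Variable n : nat.

Lemma alpha_Some_lift (g : 'S_n) q0 t : alpha g (Some q0) t (lift t q0) = t.
Proof. by rewrite permE /alpha_fun liftK eqxx. Qed.

Lemma alpha_max_inj :
  injective (fun p : 'S_n * 'I_n => alpha p.1 (Some p.2) ord_max).
Proof.
move=> [g1 q1] [g2 q2] /= eq_alpha.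
have eq_q : q1 = q2.
  apply: (@lift_inj _ ord_max); apply: (@perm_inj _ (alpha g2 (Some q2) ord_max)).
  by rewrite -{1}eq_alpha !alpha_Some_lift.
by move: eq_alpha; rewrite -eq_q !alpha_Some => /mulgI /lift_perm_inj ->.
Qed.

Lemma alpha_max_surj (s : 'S_n.+1) : (0 < n)%N -> is_full_cycle s ->
  exists g q0, alpha g (Some q0) ord_max = s.
Proof.
move=> n_gt0 full_s; set a := s^-1 ord_max.
have a_max : a != ord_max.
  have s_max : s ord_max != ord_max.
    by apply: (full_cycle_fixN (y := ord0)) full_s; rewrite -val_eqE /= eq_sym -lt0n.
  by apply: contra s_max => /eqP def_max; rewrite -{1}def_max /a permKV.
case: (unliftP ord_max a) a_max => [q0 def_a _|->]; last by rewrite eqxx.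
have [g def_g] : exists g, lift_perm ord_max ord_max g = tperm a ord_max * s.
  by apply: lift_perm_fixP; rewrite permM tpermR permKV.
by exists g, q0; rewrite alpha_Some def_g -def_a tpermKg.
Qed.

End AlphaBijection.

Lemma card_full_cycles n : #|full_cycles n.+1| = n`!.
Proof.
elim: n => [|n IH].
  have -> : full_cycles 1 = setT.
    apply/setP => s; rewrite !inE; apply/(is_full_cycleP _ ord0) => x y.
    by rewrite (ord1 y) (ord1 x) porbit_id.
  by rewrite cardsT card_Sn.
pose F (p : 'S_n.+1 * 'I_n.+1) := alpha p.1 (Some p.2) ord_max.
have -> : full_cycles n.+2 = F @: setX (full_cycles n.+1) setT.
  apply/setP => s; rewrite inE; apply/idP/imsetP => [full_s|[[g q0]]].
    have [g [q0 def_s]] := alpha_max_surj (ltn0Sn n) full_s.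
    exists (g, q0) => //; rewrite !inE andbT.
    by rewrite -(is_full_cycle_alpha g (Some q0) ord_max) def_s.
  by rewrite !inE andbT /F /= => full_g ->; rewrite is_full_cycle_alpha.
by rewrite (card_imset _ (@alpha_max_inj _)) cardsX cardsT card_ord IH factS mulnC.
Qed.

(* The rotation k |-> k + 1 (mod n.+1). *)
Definition cycle_shift n : 'S_n.+1 := lift_perm ord_max ord0 1.

Section CycleShift.
Variable n : nat.
Local Notation c := (cycle_shift n).

Lemma cycle_shiftX_ord0 (y : 'I_n.+1) : (c ^+ y) ord0 = y.
Proof.
case: y => j /=; elim: j => [|j IH] lt_j; first by rewrite expg0 perm1; apply: val_inj.
rewrite expgSr permM (IH (ltnW lt_j)).
have -> : Ordinal (ltnW lt_j) = lift ord_max (Ordinal (lt_j : (j < n)%N)).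
  by apply: val_inj; rewrite /= /bump leqNgt -ltnS lt_j.
by rewrite lift_perm_lift perm1; apply: val_inj.
Qed.

Lemma cycle_shiftXC i j x : (c ^+ i) ((c ^+ j) x) = (c ^+ j) ((c ^+ i) x).
Proof. by rewrite -!permM -!expgD addnC. Qed.

Lemma cycle_shift_order : c ^+ n.+1 = 1.
Proof.
have c0 : (c ^+ n.+1) ord0 = ord0.
  by rewrite expgSr permM (cycle_shiftX_ord0 ord_max) lift_perm_id.
apply/permP => y; rewrite perm1 -{1}(cycle_shiftX_ord0 y) cycle_shiftXC c0.
exact: cycle_shiftX_ord0.
Qed.

Hypothesis m_prime : prime n.+1.
Let n_gt0 : (0 < n)%N := prime_gt1 m_prime.
Local Notation X := <[c]>%G.

Lemma card_cycle_shift : #|X| = n.+1.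
Proof.
have c_neq1 : #[c] != 1%N.
  rewrite order_eq1; apply/eqP => /permP /(_ ord0).
  by rewrite -[c]expg1 (cycle_shiftX_ord0 (Ordinal (n_gt0 : (1 < n.+1)%N))) perm1 => [] //.
by apply/(prime_nt_dvdP m_prime c_neq1); rewrite order_dvdn cycle_shift_order.
Qed.

Lemma cycle_shift_generated a : a \in X -> a != 1 -> <[a]> = X.
Proof.
move=> aX a1; apply/eqP; rewrite eqEcard cycle_subG aX /= card_cycle_shift.
have : (#|<[a]>| %| #|X|)%N by apply: cardSg; rewrite cycle_subG.
by rewrite card_cycle_shift => /(prime_nt_dvdP m_prime) -> //; rewrite order_eq1.
Qed.

Lemma cent_cycle_shift s : commute s c -> s \in X.
Proof.
move=> cs; apply/cycleP; exists (s ord0); apply/permP => y.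
rewrite -(cycle_shiftX_ord0 y) -permM -(commuteX y cs) permM.
by rewrite -{1}(cycle_shiftX_ord0 (s ord0)) cycle_shiftXC.
Qed.

Lemma full_cycle_cycle_shift a : a \in X -> a != 1 -> is_full_cycle a.
Proof.
move=> aX a1; apply/(is_full_cycleP _ ord0) => x y.
have /cycleP [i def_c] : c \in <[a]> by rewrite cycle_shift_generated ?cycle_id.
have def_y : y = (c ^+ (y + (n.+1 - x))) x.
  rewrite -{2}(cycle_shiftX_ord0 x) -permM -expgD.
  have -> : (x + (y + (n.+1 - x)) = y + n.+1)%N by rewrite addnC -addnA subnK // ltnW.
  by rewrite expgD permM cycle_shift_order perm1 cycle_shiftX_ord0.
by apply/porbitP; exists (i * (y + (n.+1 - x)))%N; rewrite expgM -def_c.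
Qed.

Lemma afix_cycle_shift a : a \in X -> a != 1 ->
  'Fix_(full_cycles n.+1 | 'J)[a] = X :\ 1.
Proof.
move=> aX a1; apply/setP => s; rewrite in_setI in_setD1 inE; apply/andP/andP.
  move=> [full_s /afix1P /= sa].
  have /cycleP [i def_c] : c \in <[a]> by rewrite cycle_shift_generated ?cycle_id.
  have sa_comm : commute s a by rewrite /commute conjgC sa.
  split; last by apply: cent_cycle_shift; rewrite def_c; apply: commuteX.
  apply: contraTneq full_s => ->; apply/negP => /(full_cycle_fixN (x := ord0) (y := ord_max)).
  by rewrite perm1 eqxx -val_eqE /= -lt0n n_gt0 => /(_ isT).
move=> [s1 sX]; split; first exact: full_cycle_cycle_shift.
apply/afix1P => /=; move: sX aX => /cycleP [i ->] /cycleP [j ->].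
by rewrite conjgE (commuteX2 i j (commute_refl c)) mulKg.
Qed.

Lemma card_conj_orbits :
  (#|orbit 'J%act X @: full_cycles n.+1| * n.+1 = n`! + n * n)%N.
Proof.
have := Frobenius_Cauchy (acts_full_cycles X); rewrite card_cycle_shift => <-.
have X1 : #|X :\ 1| = n.
  by have := cardsD1 1 X; rewrite group1 card_cycle_shift add1n => -[].
have fix1 : 'Fix_(full_cycles n.+1 | 'J)[1] = full_cycles n.+1.
  by apply/setIidPl/subsetP => s _; apply/afix1P; rewrite /= conjg1.
rewrite (bigD1 1) ?group1 //= fix1 card_full_cycles; congr (_ + _)%N.
rewrite (eq_bigl (mem (X :\ 1))) => [|a]; last by rewrite !inE andbC.
rewrite (eq_bigr (fun _ => n)) => [|a]; last first.
  by move=> /setD1P [a1 aX]; rewrite afix_cycle_shift.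
by rewrite sum_nat_const X1.
Qed.

End CycleShift.

Local Close Scope group_scope.
Local Open Scope ring_scope.

Definition span_gelt k (S : {set 'S_k}) : {vspace grpalg k} :=
  (\sum_(s in S) <[gelt s]>)%VS.

Definition conj_diff_span k (c : 'S_k) (S : {set 'S_k}) : {vspace grpalg k} :=
  (\sum_(s in S) <[gelt (s ^ c)%g - gelt s]>)%VS.

Section SpanGelt.
Variable k : nat.
Implicit Types (S : {set 'S_k}) (w : grpalg k).

Lemma geltE (s t : 'S_k) : gelt s t = (t == s)%:R.
Proof. by rewrite ffunE. Qed.

Lemma gelt_neq0 (s : 'S_k) : gelt s != 0.
Proof. by apply/eqP => /ffunP /(_ s); rewrite geltE eqxx ffunE => /eqP; rewrite oner_eq0. Qed.

Lemma span_gelt_vanish S w y : w \in span_gelt S -> y \notin S -> w y = 0.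
Proof.
move=> /memv_sumP [ws ws_line ->] yS; rewrite sum_ffunE big1 // => s sS.
have /vlineP [a ->] := ws_line s sS.
by rewrite ffunE geltE; case: eqP => [eq_ys|_]; [rewrite eq_ys sS in yS | rewrite scaler0].
Qed.

Lemma sum_gelt S (s : 'S_k) : \sum_(y in S) gelt s y = (s \in S)%:R.
Proof.
under eq_bigr do rewrite geltE.
case: (boolP (s \in S)) => sS; last first.
  by rewrite big1 // => y yS; case: eqP => // eq_ys; rewrite -eq_ys yS in sS.
by rewrite (bigD1 s) //= eqxx big1 ?addr0 // => y /andP [_ /negbTE ->].
Qed.

Lemma dim_span_gelt S : \dim (span_gelt S) = #|S|.
Proof.
elim: {S}_.+1 {-2}S (ltnSn #|S|) => // N IH S.
case: (set_0Vmem S) => [-> _|[x xS] S_lt]; first by rewrite /span_gelt big_set0 dimv0 cards0.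
rewrite /span_gelt (bigD1 x) //= (eq_bigl (mem (S :\ x))) => [|s]; last by rewrite !inE andbC.
have cap0 : (<[gelt x]> :&: span_gelt (S :\ x))%VS = 0%VS.
  apply/eqP; rewrite -subv0; apply/subvP => w /memv_capP [/vlineP [a ->] wS].
  have := span_gelt_vanish wS (y := x); rewrite !inE eqxx ffunE geltE eqxx => /(_ isT).
  by move/eqP; rewrite scaler_eq0 oner_eq0 orbF => /eqP ->; rewrite scale0r memv0.
have := dimv_sum_cap <[gelt x]> (span_gelt (S :\ x)).
rewrite cap0 dimv0 addn0 dim_vline gelt_neq0 IH => [->|]; first by rewrite (cardsD1 x S) xS.
by rewrite (cardsD1 x S) xS in S_lt.
Qed.

End SpanGelt.

Section ConjugationOrbits.
Variables (k : nat) (c : 'S_k) (C : {set 'S_k}).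
Hypothesis actsC : [acts <[c]>%g, on C | 'J].
Local Notation orb s := (orbit 'J%act <[c]>%g s).
Local Notation O := (orbit 'J%act <[c]>%g @: C).
Local Notation R := [set repr o | o in O].
Local Notation D := (conj_diff_span c C).

Lemma orbit_subC s : s \in C -> orb s \subset C.
Proof. by move=> sC; apply/subsetP => _ /orbitP [a ca <-]; rewrite (actsP actsC). Qed.

Lemma repr_orbit o : o \in O -> repr o \in o /\ orb (repr o) = o.
Proof.
move=> /imsetP [t _ ->]; have rt : repr (orb t) \in orb t by apply/mem_repr/orbit_refl.
by split => //; apply/orbit_eqP.
Qed.

Lemma repr_subC : R \subset C.
Proof.
apply/subsetP => _ /imsetP [o oO ->]; have [ro _] := repr_orbit oO.
by move: oO ro => /imsetP [t tC ->]; apply/subsetP/orbit_subC.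
Qed.

Lemma card_repr : #|R| = #|O|.
Proof.
apply: card_in_imset => o1 o2 o1O o2O eq_r.
by have [_ <-] := repr_orbit o1O; have [_ <-] := repr_orbit o2O; rewrite eq_r.
Qed.

Lemma conj_diff_expg s i : s \in C -> gelt s - gelt (s ^ c ^+ i)%g \in D.
Proof.
move=> sC; elim: i => [|i IH]; first by rewrite expg0 conjg1 subrr mem0v.
have sciC : (s ^ c ^+ i)%g \in C by rewrite (actsP actsC) ?mem_cycle.
set t := (s ^ c ^+ i)%g in IH sciC *.
have -> : gelt s - gelt (s ^ c ^+ i.+1)%g
          = (gelt s - gelt t) - (gelt (t ^ c)%g - gelt t).
  by rewrite expgSr conjgM opprB addrA subrK.
by apply: memvB => //; rewrite memvE (sumv_sup t).
Qed.

Lemma conj_diff_orbit_sum w t : w \in D -> \sum_(y in orb t) w y = 0.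
Proof.
move=> /memv_sumP [ws ws_line ->].
under eq_bigr do rewrite sum_ffunE.
rewrite exchange_big /= big1 // => s sC.
have /vlineP [a ->] := ws_line s sC.
under eq_bigr do rewrite ffunE [X in _ *: X]ffunE [X in _ + X]ffunE.
rewrite -scaler_sumr sumrB !sum_gelt.
suff -> : ((s ^ c)%g \in orb t) = (s \in orb t) by rewrite subrr scaler0.
by apply: orbit_transl; apply: (mem_orbit 'J%act s (cycle_id c)).
Qed.

Lemma span_gelt_conj_sum : span_gelt C = (D + span_gelt R)%VS.
Proof.
apply/eqP; rewrite eqEsubv subv_add; apply/and3P; split.
- apply/subv_sumP => s sC; rewrite -memvE.
  have [rs _] := repr_orbit (imset_f (orbit 'J%act <[c]>%g) sC).
  rewrite -[gelt s](subrK (gelt (repr (orb s)))); apply: memv_add.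
    by move: rs => /orbitP [a /cycleP [i ->] <-]; apply: conj_diff_expg.
  by rewrite memvE (sumv_sup (repr (orb s))) // imset_f // imset_f.
- apply/subv_sumP => s sC; rewrite -memvE; apply: memvB.
    by rewrite memvE (sumv_sup (s ^ c)%g) // (actsP actsC) ?cycle_id.
  by rewrite memvE (sumv_sup s).
- by apply/subv_sumP => s sR; apply: (sumv_sup s) => //; apply: (subsetP repr_subC).
Qed.

Lemma conj_diff_cap_repr : (D :&: span_gelt R = 0)%VS.
Proof.
apply/eqP; rewrite -subv0; apply/subvP => w /memv_capP [wD wR]; rewrite memv0.
apply/eqP/ffunP => y; rewrite ffunE.
case: (boolP (y \in R)) => yR; last exact: span_gelt_vanish wR yR.
have := conj_diff_orbit_sum y wD; rewrite (bigD1 y) ?orbit_refl //= big1 ?addr0 //.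
move=> s /andP [sy sNy]; apply: (span_gelt_vanish wR); apply: contra sNy => sR.
have [o1 o1O def_y] := imsetP yR; have [o2 o2O def_s] := imsetP sR.
have [_ o1E] := repr_orbit o1O; have [_ o2E] := repr_orbit o2O.
have : orb s = orb y by apply/orbit_eqP.
by rewrite def_y def_s o1E o2E => ->.
Qed.

Lemma dim_span_gelt_orbits : \dim (span_gelt C) = (\dim D + #|O|)%N.
Proof.
have := dimv_sum_cap D (span_gelt R).
by rewrite -span_gelt_conj_sum conj_diff_cap_repr dimv0 addn0 !dim_span_gelt card_repr.
Qed.

End ConjugationOrbits.

Section VassilievSpan.
Variable n : nat.

Lemma vass_setT (g : 'S_n) q :
  vass g q [set: 'I_n] = gelt (alpha g q ord0) - gelt (alpha g q ord_max).
Proof.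
pose F k := gelt (alpha g q (inord k)).
rewrite /vass (eq_bigl xpredT) => [|j]; last by rewrite inE.
transitivity (- \sum_(0 <= k < n) (F k.+1 - F k)).
  rewrite big_mkord -sumrN; apply: eq_bigr => j _; rewrite opprB /F.
  congr (gelt (alpha _ _ _) - gelt (alpha _ _ _)); apply: val_inj => /=.
    by rewrite inordK // ltnS ltnW.
  by rewrite inordK ?ltnS // /bump add1n.
rewrite telescope_sumr // opprB /F.
by congr (gelt (alpha _ _ _) - gelt (alpha _ _ _)); apply: val_inj; rewrite /= inordK.
Qed.

Lemma vass_span_conj_diff : (0 < n)%N ->
  vass_span n = conj_diff_span (cycle_shift n) (full_cycles n.+1).
Proof.
move=> n_gt0; apply/eqP; rewrite eqEsubv; apply/andP; split.
  apply/subv_sumP => g _; apply/subv_sumP => q _; apply/subv_sumP => v /andP [].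
  move=> /imsetP [i _ ->] /forallP /(_ i); rewrite porbit_id /=.
  case/andP; rewrite is_full_cycle_alpha; case: q => [q0 full_g _|]; last first.
    by move=> /eqP n0; rewrite n0 in n_gt0.
  have -> : porbit g i = [set: 'I_n].
    by apply/setP => k; rewrite inE; apply/(is_full_cycleP _ i).
  rewrite vass_setT alpha_conj; apply: (sumv_sup (alpha g (Some q0) ord_max)) => //.
  by rewrite inE is_full_cycle_alpha.
apply/subv_sumP => s; rewrite inE => full_s.
have [g [q0 def_s]] := alpha_max_surj n_gt0 full_s.
have full_g : is_full_cycle g by rewrite -(is_full_cycle_alpha g (Some q0) ord_max) def_s.
have porbitT : porbit g q0 = [set: 'I_n].
  by apply/setP => k; rewrite inE; apply/(is_full_cycleP _ q0).
apply: (sumv_sup g) => //; apply: (sumv_sup (Some q0)) => //.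
apply: (sumv_sup [set: 'I_n]).
  rewrite -porbitT imset_f //=; apply/forallP => j.
  by rewrite !is_full_cycle_alpha full_g implybT.
by rewrite vass_setT alpha_conj def_s.
Qed.

End VassilievSpan.

Theorem mainTheorem19 (m : nat) (hm : prime m) :
  (H_dim m)%:R = (((m - 1)`!)%:R - (m - 1)%:R) / m%:R + (m - 1)%:R :> rat.
Proof.
case: m hm => [//|n] m_prime; have n_gt0 : (0 < n)%N := prime_gt1 m_prime.
have cycle_spanE : cycle_span n.+1 = span_gelt (full_cycles n.+1).
  by apply: eq_bigl => s; rewrite inE.
have dimH : H_dim n.+1 = #|orbit 'J%act <[cycle_shift n]>%g @: full_cycles n.+1|.
  rewrite /H_dim vass_span_conj_diff // cycle_spanE.
  by rewrite (dim_span_gelt_orbits (acts_full_cycles <[cycle_shift n]>%g)) addKn.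
apply: (mulIf (x := n.+1%:R)); first by rewrite pnatr_eq0.
rewrite dimH -natrM card_conj_orbits // mulrDl divfK ?pnatr_eq0 // subn1 /=.
rewrite natrD !natrM -addn1 natrD; ring.
Qed.
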